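(* Suppose $p\nmid g(T_1,0)$, i.e. $g(T_1,0)\not\equiv0\pmod p$. Assume that for every finite order character $\psi$ of $\Gamma$ there is an inclusion of ideals $\big(L(T_1,\psi(T_2))\big)\subseteq\big(g(T_1,\psi(T_2))\big)$ in $\mathcal O_\psi[[T_1]]$. Then $\big(L(T_1,T_2)\big)\subseteq\big(g(T_1,T_2)\big)$ in $\mathbb Z_p[[T_1,T_2]]$.
   Context: Let $p$ be an odd prime, $E/\mathbb Q$ an elliptic curve of conductor $N$ with associated newform $f\in S_2(\Gamma_0(N))$, assumed $p$-ordinary, $k$ an imaginary quadratic field, $k_\infty$ the compositum of all $\mathbb Z_p$-extensions of $k$, $G=\mathrm{Gal}(k_\infty/k)\cong\mathbb Z_p^2$, $k^{\mathrm{cyc}}$ and $D_\infty$ the cyclotomic and anticyclotomic $\mathbb Z_p$-extensions, $\Gamma=\mathrm{Gal}(k^{\mathrm{cyc}}/k)$, $\Omega=\mathrm{Gal}(D_\infty/k)$, $H=\mathrm{Gal}(k_\infty/k^{\mathrm{cyc}})$ (which maps isomorphically onto $\Omega$), so that $G=H\times\mathrm{Gal}(k_\infty/D_\infty)$ with $\mathrm{Gal}(k_\infty/D_\infty)$ mapping isomorphically onto $\Gamma$. Fix topological generators $\gamma_1$ of $H$ and $\gamma_2$ of $\mathrm{Gal}(k_\infty/D_\infty)$, and the isomorphism $\Lambda(G)=\mathbb Z_p[[G]]\cong\mathbb Z_p[[T_1,T_2]]$, $\gamma_i\mapsto T_i+1$. $g(T_1,T_2)$ is the image of $\mathrm{char}_{\Lambda(G)}X(E/k_\infty)$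 (characteristic power series of the Pontryagin dual of the $p^\infty$-Selmer group of $E$ over $k_\infty$; taken to be $0$ if it is not torsion), and $L(T_1,T_2)$ is the image of the two-variable $p$-adic $L$-function $L_p(f,k)\in\Lambda(G)$ interpolating the values $L(f\times\Theta(\overline{\mathcal W}),1)/(8\pi^2\langle f,f\rangle_N)$ for finite order characters $\mathcal W$ of $G$. For a finite order character $\psi$ of $\Gamma$ (viewed on $\mathrm{Gal}(k_\infty/D_\infty)$), $\mathcal O_\psi$ is $\mathbb Z_p$ with the values of $\psi$ adjoined and $h(T_1,\psi(T_2))$ denotes the image of $h\in\mathbb Z_p[[T_1,T_2]]$ under $T_2\mapsto\psi(\gamma_2)-1$. *)

From HB Require Import structures.
From mathcomp Require Import all_boot all_order all_algebra.
Set Implicit Arguments. Unset Strict Implicit. Unset Printing Implicit Defensive.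
Import GRing.Theory.
Local Open Scope ring_scope.

(* Z_p is modelled as the inverse limit of Z/p^(n+1) (level n).
   Z_p[[T1,T2]] = lim_n (Z/p^(n+1))[[T1,T2]]: an element is a family of
   coefficient arrays F n i j (coefficient of T1^i T2^j at level n),
   compatible under reduction. *)

Definition zp_red (p n : nat) (a : 'Z_(p ^ n.+2)) : 'Z_(p ^ n.+1) := inZp (val a).

Definition ps2 (p : nat) := forall n : nat, nat -> nat -> 'Z_(p ^ n.+1).

Definition ps2_compat (p : nat) (F : ps2 p) : Prop :=
  forall n i j, @zp_red p n (F n.+1 i j) = F n i j.

Definition ps2_mul (p : nat) (F G : ps2 p) : ps2 p :=
  fun n i j => \sum_(a < i.+1) \sum_(b < j.+1) F n a b * G n (i - a)%N (j - b)%N.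

Definition ps2_dvd (p : nat) (g L : ps2 p) : Prop :=
  exists H : ps2 p, ps2_compat H /\ forall n i j, L n i j = ps2_mul g H n i j.

(* O_k := Z_p[zeta_{p^k}] = Z_p[X]/(Phi_{p^k}(X)); at level n it is
   (Z/p^(n+1))[X]/(Phi_{p^k}), elements represented by polynomials
   modulo Phi_{p^k}. *)
Definition cyclo_pk (p k n : nat) : {poly 'Z_(p ^ n.+1)} :=
  if k is k'.+1 then \sum_(i < p) 'X^(i * p ^ k') else 'X - 1.

Definition ocong (p k n : nat) (a b : {poly 'Z_(p ^ n.+1)}) : Prop :=
  exists q, a - b = q * cyclo_pk p k n.

Definition pol_red (p n : nat) (q : {poly 'Z_(p ^ n.+2)}) : {poly 'Z_(p ^ n.+1)} :=
  map_poly (@zp_red p n) q.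

(* O_k[[T1]] = lim_n (O_k/p^(n+1))[[T1]] *)
Definition ops (p : nat) := forall n : nat, nat -> {poly 'Z_(p ^ n.+1)}.

Definition ops_compat (p k : nat) (F : ops p) : Prop :=
  forall n i, @ocong p k n (@pol_red p n (F n.+1 i)) (F n i).

Definition ops_mul (p : nat) (F G : ops p) : ops p :=
  fun n i => \sum_(c < i.+1) F n c * G n (i - c)%N.

Definition ops_dvd (p k : nat) (g L : ops p) : Prop :=
  exists H : ops p, ops_compat k H /\
    forall n i, @ocong p k n (L n i) (ops_mul g H n i).

(* h(T1, psi(T2)) for the character psi with psi(gamma_2) = zeta_{p^k}^a
   (zeta_{p^k} = class of X): substitute T2 := X^a - 1.  At level n the
   terms with j >= (n+1) * phi(p^k) vanish (since (zeta-1)^phi(p^k) is in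
   p O_k), so the sum is finite. *)
Definition eval_psi (p k a : nat) (F : ps2 p) : ops p :=
  fun n i => \sum_(j < (n.+1 * totient (p ^ k))%N)
               (F n i j)%:P * ('X^a - 1) ^+ j.

From HB Require Import structures.
From mathcomp Require Import all_boot all_order all_algebra.
From mathcomp Require Import zify ring.
From Stdlib Require Import ClassicalEpsilon.
Set Implicit Arguments. Unset Strict Implicit. Unset Printing Implicit Defensive.
Import GRing.Theory Num.Theory.
Local Open Scope ring_scope.

(* Only the characters with psi(gamma_2) = zeta_{p^(k+1)} are
   used.  We fix a level n, lift all coefficients to Z and work modulo p^N,
   N = n + 1; the specialisation T2 := zeta - 1 becomes T2 := X - 1 in Z[X]
   modulo the ideal I_m = (Phi_{p^(k+1)}, p^m), whose quotient is O_{k+1}/p^m.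
   - Cauchy products, and cancellation of a series g with g(T1, 0) != 0 over a
     domain, first modulo T2^K and then, patching, in R[[T1, T2]].
   - O_{k+1} has no p-torsion, and O_{k+1}/p = F_p[X]/(X^phi) via X := X + 1;
     hence g(T1, zeta - 1) is a non-zero-divisor on (O_{k+1}/p^m)[[T1]].
   - Lifting: if L = g G + p^m M (m < N), the hypothesis for all k gives
     M = g y modulo (p, T2^phi(p^(k+1))) for every k, hence modulo p; so
     L = g G modulo p^N for some G.  The quotient modulo p^N is unique.
   - The quotients at the different levels are therefore compatible and form
     the quotient H in Z_p[[T1, T2]] = lim (Z/p^(n+1))[[T1, T2]]. *)

Section Convolution.
Variable R : comNzRingType.

Definition conv (f g : nat -> nat -> R) (i j : nat) : R :=
  \sum_(a < i.+1) \sum_(b < j.+1) f a b * g (i - a)%N (j - b)%N.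

Lemma eq_convl (f f' g : nat -> nat -> R) i j :
  (forall a b, (a <= i)%N -> (b <= j)%N -> f a b = f' a b) ->
  conv f g i j = conv f' g i j.
Proof.
by move=> E; apply: eq_bigr => a _; apply: eq_bigr => b _; rewrite E // -ltnS.
Qed.

Lemma eq_convr (f g g' : nat -> nat -> R) i j :
  (forall a b, (a <= i)%N -> (b <= j)%N -> g a b = g' a b) ->
  conv f g i j = conv f g' i j.
Proof.
by move=> E; apply: eq_bigr => a _; apply: eq_bigr => b _; rewrite E ?leq_subr.
Qed.

Lemma convD (f g h : nat -> nat -> R) i j :
  conv f (fun a b => g a b + h a b) i j = conv f g i j + conv f h i j.
Proof.
rewrite /conv -big_split; apply: eq_bigr => a _; rewrite -big_split.
by apply: eq_bigr => b _; rewrite mulrDr.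
Qed.

Lemma convB (f g h : nat -> nat -> R) i j :
  conv f (fun a b => g a b - h a b) i j = conv f g i j - conv f h i j.
Proof.
rewrite /conv -sumrB; apply: eq_bigr => a _; rewrite -sumrB.
by apply: eq_bigr => b _; rewrite mulrBr.
Qed.

Lemma convZ (f g : nat -> nat -> R) c i j :
  conv f (fun a b => c * g a b) i j = c * conv f g i j.
Proof.
rewrite /conv mulr_sumr; apply: eq_bigr => a _; rewrite mulr_sumr.
by apply: eq_bigr => b _; rewrite mulrCA.
Qed.

Lemma conv_row0 (f g : nat -> nat -> R) i j :
  (forall i' j', (j' < j)%N -> g i' j' = 0) ->
  conv f g i j = \sum_(a < i.+1) f a 0%N * g (i - a)%N j.
Proof.
move=> gl; apply: eq_bigr => a _.
rewrite big_ord_recl /= subn0 big1 ?addr0 // => b _.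
by rewrite gl ?mulr0 //= subnSK // leq_subr.
Qed.

(* Reading R[X][[T1]] as R[[T1,X]]: the X-coefficients of a product of
   power series in T1 with polynomial coefficients form the Cauchy product. *)
Lemma coef_sum_mul (P Q : nat -> {poly R}) i j :
  (\sum_(c < i.+1) P c * Q (i - c)%N)`_j =
  conv (fun a b => (P a)`_b) (fun a b => (Q a)`_b) i j.
Proof. by rewrite coef_sum; apply: eq_bigr => c _; exact: coefM. Qed.
End Convolution.

Lemma conv_rmorph (R S : comNzRingType) (f : {rmorphism R -> S}) F G i j :
  f (conv F G i j) = conv (fun a b => f (F a b)) (fun a b => f (G a b)) i j.
Proof.
rewrite /conv rmorph_sum; apply: eq_bigr => a _; rewrite rmorph_sum.
by apply: eq_bigr => b _; rewrite rmorphM.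
Qed.

Lemma conv_intr (S : comNzRingType) (F G : nat -> nat -> int) i j :
  (conv F G i j)%:~R = conv (fun a b => (F a b)%:~R) (fun a b => (G a b)%:~R) i j :> S.
Proof. exact: (conv_rmorph (intr : int -> S)). Qed.

Section CancelOverDomain.
Variable R : idomainType.

Lemma cauchy_cancel (g y : nat -> R) d :
  g d != 0 -> (forall a, (a < d)%N -> g a = 0) ->
  (forall i, \sum_(a < i.+1) g a * y (i - a)%N = 0) -> forall i, y i = 0.
Proof.
move=> gd gl gy i; elim/ltn_ind: i => i IH.
have := gy (i + d)%N; rewrite (bigD1 (inord d)) //= inordK ?ltnS ?leq_addl //.
rewrite addnK big1 ?addr0; first by move/eqP; rewrite mulf_eq0 (negPf gd) => /eqP.
move=> a /eqP ad; have [ltad|] := ltnP a d; first by rewrite gl ?mul0r.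
rewrite leq_eqVlt => /orP [/eqP da|ltda].
  by case: ad; apply: val_inj; rewrite /= inordK ?ltnS ?leq_addl.
by rewrite IH ?mulr0 //; have := ltn_ord a; lia.
Qed.

(* If g(T1,0) != 0, multiplication by g is injective on R[[T1,T2]]/(T2^K):
   induction on the rows, each row being a one-variable cancellation. *)
Lemma conv_cancel_trunc (g y : nat -> nat -> R) K :
  (exists d, g d 0%N != 0) ->
  (forall i j, (j < K)%N -> conv g y i j = 0) ->
  forall i j, (j < K)%N -> y i j = 0.
Proof.
move=> [d0 gd0] gy.
have [d gd dmin] := ex_minnP (ex_intro (fun d => g d 0%N != 0) d0 gd0).
have gl a : (a < d)%N -> g a 0%N = 0.
  by move=> ltad; apply/eqP; apply: contraTT ltad => /dmin; rewrite -leqNgt.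
move=> i j; elim/ltn_ind: j i => j IH i ltjK.
apply: (@cauchy_cancel (fun a => g a 0%N) (fun i => y i j) d gd gl) => i'.
by rewrite -conv_row0 ?gy // => i'' j' ltj'j; apply: IH (ltn_trans ltj'j ltjK).
Qed.

(* Truncated quotients patch together: if L is divisible by g modulo T2^K for
   every K, then g divides L in R[[T1,T2]]; the truncated quotients agree
   on their common range by conv_cancel_trunc. *)
Lemma conv_patch (g L : nat -> nat -> R) :
  (exists d, g d 0%N != 0) ->
  (forall K, exists y, forall i j, (j < K)%N -> L i j = conv g y i j) ->
  exists y, forall i j, L i j = conv g y i j.
Proof.
move=> g0 /choice [Y HY].
have agree K1 K2 i j : (j < K1)%N -> (j < K2)%N -> Y K1 i j = Y K2 i j.
  move=> h1 h2; apply/eqP; rewrite -subr_eq0; apply/eqP.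
  apply: (conv_cancel_trunc (y := fun a b => Y K1 a b - Y K2 a b) (K := minn K1 K2) g0);
    last by rewrite leq_min h1 h2.
  move=> i' j'; rewrite leq_min => /andP[l1 l2].
  by rewrite convB -!HY // subrr.
exists (fun i j => Y j.+1 i j) => i j.
by rewrite (HY j.+1) //; apply: eq_convr => a b _ hb; apply: agree; rewrite ltnS.
Qed.
End CancelOverDomain.

Section IntegerLifts.
Variable m : nat.
Hypothesis m_gt1 : (1 < m)%N.

Lemma intr_Zp_eq0 (z : int) : ((z%:~R : 'Z_m) == 0) = (m%:Z %| z)%Z.
Proof.
case: z => n; rewrite ?NegzE ?mulrNz ?oppr_eq0 -pmulrn -(inj_eq val_inj) /=;
by rewrite val_Zp_nat.
Qed.

Lemma intr_Zp_eq (a b : int) : ((a%:~R : 'Z_m) = b%:~R) <-> (m%:Z %| a - b)%Z.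
Proof. by rewrite -intr_Zp_eq0 rmorphB /= subr_eq0; split => [->|/eqP]. Qed.

Definition zlift (x : 'Z_m) : int := (val x)%:Z.

Lemma zliftK (x : 'Z_m) : (zlift x)%:~R = x.
Proof. by rewrite /zlift -pmulrn natr_Zp. Qed.

Definition plift (P : {poly 'Z_m}) : {poly int} := map_poly zlift P.

Lemma pliftK P : map_poly (intr : int -> 'Z_m) (plift P) = P.
Proof. by apply/polyP => i; rewrite coef_map /= coef_map_id0 ?zliftK. Qed.

Lemma map_poly_Zp_eq0 (D : {poly int}) :
  map_poly (intr : int -> 'Z_m) D = 0 -> exists Q, D = m%:R * Q.
Proof.
move=> D0; exists (\poly_(i < size D) (D`_i %/ m%:Z)%Z).
apply/polyP => i; rewrite mulr_natl coefMn coef_poly.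
have mDi : (m%:Z %| D`_i)%Z.
  by rewrite -intr_Zp_eq0 -(coef_map (intr : int -> 'Z_m)) D0 coef0.
case: ifP => hs; last by rewrite mul0rn nth_default // leqNgt hs.
by rewrite -mulr_natr natz divzK.
Qed.
End IntegerLifts.

Section CyclotomicIdeal.
Variables (p k : nat).
Hypothesis hp : prime p.

(* Phi = Phi_{p^(k+1)}, of degree phi = phi(p^(k+1)); O_{k+1} = Z_p[X]/(Phi). *)
Definition Phi : {poly int} := \sum_(i < p) 'X^(i * p ^ k).
Definition phi : nat := (p.-1 * p ^ k)%N.

(* Membership in the ideal I_m = (Phi, p^m) of Z[X]; the quotient Z[X]/I_m is
   O_{k+1}/p^m. *)
Definition inI (m : nat) (A : {poly int}) :=
  exists U V : {poly int}, A = U * Phi + (p ^ m)%:R * V.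

Lemma inID m A B : inI m A -> inI m B -> inI m (A + B).
Proof. by move=> [U [V ->]] [U' [V' ->]]; exists (U + U'), (V + V'); ring. Qed.

Lemma inIN m A : inI m A -> inI m (- A).
Proof. by move=> [U [V ->]]; exists (- U), (- V); ring. Qed.

Lemma inIB m A B : inI m A -> inI m B -> inI m (A - B).
Proof. by move=> hA hB; apply: inID => //; apply: inIN. Qed.

Lemma inIMl m A C : inI m A -> inI m (C * A).
Proof. by move=> [U [V ->]]; exists (C * U), (C * V); ring. Qed.

Lemma inIPhi m C : inI m (Phi * C).
Proof. by exists C, 0; rewrite mulr0 addr0 mulrC. Qed.

Lemma inIp m C : inI m ((p ^ m)%:R * C).
Proof. by exists 0, C; rewrite mul0r add0r. Qed.

Lemma inI_le m m' A : (m <= m')%N -> inI m' A -> inI m A.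
Proof.
move=> hm [U [V ->]]; exists U, ((p ^ (m' - m))%:R * V).
by rewrite mulrA -natrM -expnD subnKC.
Qed.

Lemma Phi_monic : Phi \is monic.
Proof.
have p_gt0 := prime_gt0 hp.
have E : ('X^(p ^ k) - 1) * Phi = 'X^(p ^ k.+1) - 1 :> {poly int}.
  rewrite /Phi (expnS p k) (mulnC p) exprM [RHS]subrX1; congr (_ * _).
  by apply: eq_bigr => i _; rewrite -exprM mulnC.
have mon n : ('X^(p ^ n) - 1 : {poly int}) \is monic.
  by rewrite -polyC1 monicXnsubC // expn_gt0 p_gt0.
by have := mon k.+1; rewrite -E monicMl.
Qed.

(* O_{k+1} has no p-torsion (Phi is monic, hence a non-zero-divisor modulo
   p^m): p^m A in I_(m+r) implies A in I_r. *)
Lemma inI_cancel m r A : inI (m + r) ((p ^ m)%:R * A) -> inI r A.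
Proof.
move=> [U [V E]].
have pm_gt1 : (1 < p ^ m)%N || (m == 0%N).
  by case: m {E} => [//|m']; rewrite -[1%N](expn0 p) ltn_exp2l // prime_gt1.
have [U' eU] : exists U', U = (p ^ m)%:R * U'.
  case/orP: pm_gt1 => [pm_gt1|/eqP m0]; last by exists U; rewrite m0 mul1r.
  apply: (map_poly_Zp_eq0 pm_gt1); set f := map_poly _.
  have fPhi_reg : GRing.lreg (f Phi) by apply/monic_lreg/monic_map/Phi_monic.
  apply: fPhi_reg; rewrite mulr0 mulrC -rmorphM /=.
  have -> : U * Phi = (p ^ m)%:R * (A - (p ^ r)%:R * V).
    by rewrite mulrBr mulrA -natrM -expnD E; ring.
  by rewrite rmorphM rmorph_nat -polyC_natr pchar_Zp // polyC0 mul0r.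
have pm0 : ((p ^ m)%:R : {poly int}) != 0.
  by rewrite -polyC_natr polyC_eq0 pnatr_eq0 expn_eq0 negb_and -lt0n prime_gt0.
exists U', V; apply: (mulfI pm0).
by rewrite E eU expnD natrM; ring.
Qed.
End CyclotomicIdeal.

Section ModP.
Variables (p k : nat).
Hypothesis hp : prime p.
Local Notation Phi := (Phi p k).
Local Notation phi := (phi p k).
Local Notation inI := (inI p k).
Local Notation mF := (map_poly (intr : int -> 'F_p)).

(* 'F_p is 'Z_(pdiv p), and pdiv p = p. *)
Lemma pdiv_gt1 : (1 < pdiv p)%N.
Proof. by rewrite pdiv_id // prime_gt1. Qed.

Lemma frobXn e (x y : {poly 'F_p}) : (x + y) ^+ (p ^ e) = x ^+ (p ^ e) + y ^+ (p ^ e).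
Proof.
by apply: exprDn_pchar; rewrite pnatX pnatE // pchar_poly pchar_Fp.
Qed.

(* Modulo p, Phi(X + 1) = X^phi: O_{k+1}/p = F_p[X]/(X^phi), X+1 = zeta. *)
Lemma Phi_shift_modp : mF Phi \Po ('X + 1) = 'X^phi.
Proof.
set Z : {poly 'F_p} := 'X^(p ^ k).
have -> : mF Phi \Po ('X + 1) = \sum_(i < p) (Z + 1) ^+ i.
  rewrite rmorph_sum (raddf_sum (comp_poly ('X + 1))) /=; apply: eq_bigr => i _.
  by rewrite map_polyXn mulnC exprM !rmorphXn /= comp_polyX frobXn expr1n.
have Z0 : Z != 0 by rewrite expf_neq0 // polyX_eq0.
apply: (mulfI Z0); have <- : (Z + 1) ^+ p - 1 = Z * \sum_(i < p) (Z + 1) ^+ i.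
  by rewrite subrX1 addrK.
have := frobXn 1 Z 1; rewrite expn1 => ->; rewrite expr1n addrK -!exprM -exprD.
by congr ('X^_); rewrite /phi; case: (p) (prime_gt0 hp) => // q _; rewrite mulnS mulnC.
Qed.

Lemma mF_shift : mF ('X + 1) = 'X + 1.
Proof. by rewrite rmorphD /= map_polyX rmorph1. Qed.

Lemma shiftK (A : {poly int}) : (A \Po ('X + 1)) \Po ('X - 1) = A.
Proof. by have := comp_polyXaddC_K A 1; rewrite polyC1. Qed.

Lemma inI1P A :
  inI 1 A <-> forall j, (j < phi)%N -> (mF (A \Po ('X + 1)))`_j = 0.
Proof.
split=> [[U [V ->]] j ltjphi|A0].
  rewrite map_comp_poly mF_shift !rmorphD !rmorphM /= rmorph_nat expn1.
  rewrite -polyC_natr pchar_Fp_0 // comp_polyC mul0r addr0 Phi_shift_modp.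
  by rewrite coefMXn ltjphi.
set B := mF (A \Po ('X + 1)).
have eB : B = drop_poly phi B * 'X^phi.
  rewrite -{1}(poly_take_drop phi B); suff -> : take_poly phi B = 0 by rewrite add0r.
  by apply/polyP => j; rewrite coef_take_poly coef0; case: ifP => // /A0.
set W := plift (drop_poly phi B).
have : mF (A \Po ('X + 1) - (Phi \Po ('X + 1)) * W) = 0.
  rewrite rmorphB rmorphM /= -/B map_comp_poly mF_shift pliftK Phi_shift_modp.
  by rewrite {1}eB mulrC subrr.
case/(map_poly_Zp_eq0 pdiv_gt1) => Q; rewrite (pdiv_id hp) => /eqP.
rewrite subr_eq => /eqP eA.
exists (W \Po ('X - 1)), (Q \Po ('X - 1)); rewrite -{1}(shiftK A) eA.
by rewrite comp_polyD !comp_polyM shiftK -polyC_natr comp_polyC polyC_natr addrC mulrC.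
Qed.

(* (zeta - 1)^phi lies in p O_{k+1}: (X - 1)^phi = Phi + p W. *)
Lemma Xsub1_phi : exists W, ('X - 1) ^+ phi = Phi + p%:R * W.
Proof.
have : mF (('X - 1) ^+ phi - Phi) = 0.
  rewrite rmorphB rmorphXn rmorphB /= map_polyX rmorph1.
  have := congr1 (comp_poly ('X - 1)) Phi_shift_modp.
  rewrite -comp_polyA comp_polyD comp_polyX comp_polyC subrK comp_polyXr.
  by rewrite rmorphXn /= comp_polyX => ->; rewrite subrr.
case/(map_poly_Zp_eq0 pdiv_gt1) => W; rewrite (pdiv_id hp) => eW.
by exists W; rewrite -eW addrCA subrr addr0.
Qed.

Lemma inI_Xsub1 N : inI N (('X - 1) ^+ (N * phi)).
Proof.
have [W eW] := Xsub1_phi.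
elim: N => [|N [U [V IH]]]; first by exists 0, 1; rewrite mul0r add0r mulr1.
rewrite mulSn exprD eW IH.
exists (U * Phi + U * p%:R * W + (p ^ N)%:R * V), (V * W).
by rewrite expnS natrM; ring.
Qed.
End ModP.

(* For an integral double sequence F (a series in Z[[T1,T2]]), rowpoly B F i
   is the coefficient of T1^i truncated below T2^B, and spec B F i its
   specialisation T2 := X - 1, i.e. T2 := zeta - 1 in O_{k+1}. *)
Definition rowpoly (B : nat) (F : nat -> nat -> int) (i : nat) : {poly int} :=
  \poly_(j < B) F i j.
Definition spec (B : nat) (F : nat -> nat -> int) (i : nat) : {poly int} :=
  rowpoly B F i \Po ('X - 1).

Lemma spec_shift B F i : spec B F i \Po ('X + 1) = rowpoly B F i.
Proof. by rewrite -comp_polyA comp_polyB comp_polyX comp_polyC addrK comp_polyXr. Qed.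

Lemma eq_spec B (F F' : nat -> nat -> int) i :
  (forall a b, F a b = F' a b) -> spec B F i = spec B F' i.
Proof. by move=> E; congr (_ \Po _); apply/polyP => j; rewrite !coef_poly E. Qed.

Lemma spec_lin B (F G : nat -> nat -> int) c i :
  spec B (fun a b => F a b + c * G a b) i = spec B F i + c%:P * spec B G i.
Proof.
rewrite /spec -(comp_polyC c ('X - 1)) -comp_polyM -comp_polyD.
congr (_ \Po _); apply/polyP => j.
by rewrite coefD coefCM !coef_poly; case: ifP; rewrite ?mulr0 ?addr0.
Qed.

Lemma rowpoly_conv B F G i : exists W,
  rowpoly B (conv F G) i - \sum_(c < i.+1) rowpoly B F c * rowpoly B G (i - c)%N
  = W * 'X^B.
Proof.
set D := _ - _; exists (drop_poly B D).
rewrite -{1}(poly_take_drop B D); suff -> : take_poly B D = 0 by rewrite add0r.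
apply/polyP => j; rewrite coef_take_poly coef0; case: ifP => // ltjB.
rewrite /D coefB coef_sum_mul /rowpoly coef_poly ltjB.
apply/eqP; rewrite subr_eq0; apply/eqP.
apply: eq_bigr => a _; apply: eq_bigr => b _.
by rewrite !coef_poly !ifT //; have := ltn_ord b; lia.
Qed.

(* Since (X - 1)^(N phi) lies in I_N, the specialisation truncated at
   T2^(N phi) is multiplicative modulo I_N. *)
Lemma spec_conv p k N (F G : nat -> nat -> int) i : prime p ->
  inI p k N (spec (N * phi p k) (conv F G) i -
             \sum_(c < i.+1) spec (N * phi p k) F c * spec (N * phi p k) G (i - c)%N).
Proof.
move=> hp; have [W eW] := rowpoly_conv (N * phi p k) F G i.
set S := (X in _ - X); have -> : S = (\sum_(c < i.+1)
    rowpoly (N * phi p k) F c * rowpoly (N * phi p k) G (i - c)%N) \Po ('X - 1).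
  rewrite (raddf_sum (comp_poly ('X - 1))).
  by apply: eq_bigr => c _; rewrite /spec -comp_polyM.
rewrite /spec -comp_polyB eW comp_polyM rmorphXn /= comp_polyX.
exact/inIMl/inI_Xsub1.
Qed.

Section NonZeroDivisor.
Variables (p k : nat).
Hypothesis hp : prime p.
Local Notation Phi := (Phi p k).
Local Notation phi := (phi p k).
Local Notation inI := (inI p k).
Local Notation mF := (map_poly (intr : int -> 'F_p)).
Variable g : nat -> nat -> int.
Local Notation gp := (fun a b => ((g a b)%:~R : 'F_p)).
Hypothesis g0 : exists d, gp d 0%N != 0.

Definition mulg (B : nat) (Y : nat -> {poly int}) (i : nat) : {poly int} :=
  \sum_(c < i.+1) spec B g c * Y (i - c)%N.

Lemma mulgB B Y Z i : mulg B (fun a => Y a - Z a) i = mulg B Y i - mulg B Z i.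
Proof. by rewrite -sumrB; apply: eq_bigr => c _; rewrite mulrBr. Qed.

Lemma mulgZ B c Y i : mulg B (fun a => c * Y a) i = c * mulg B Y i.
Proof. by rewrite mulr_sumr; apply: eq_bigr => a _; rewrite mulrCA. Qed.

Lemma inI_choice m (Y : nat -> {poly int}) : (forall i, inI m (Y i)) ->
  exists U V : nat -> {poly int}, forall i, Y i = U i * Phi + (p ^ m)%:R * V i.
Proof.
move=> Y_I; have [UV eY] : exists UV : nat -> {poly int} * {poly int},
    forall i, Y i = (UV i).1 * Phi + (p ^ m)%:R * (UV i).2.
  apply: (choice (fun i (UV : {poly int} * {poly int}) =>
                    Y i = UV.1 * Phi + (p ^ m)%:R * UV.2)) => i.
  by have [U [V eY]] := Y_I i; exists (U, V).
by exists (fun i => (UV i).1), (fun i => (UV i).2).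
Qed.

Lemma mulg_modp B (Y : nat -> {poly int}) i j : (j < B)%N ->
  (mF (mulg B Y i \Po ('X + 1)))`_j =
  conv gp (fun a b => (mF (Y a \Po ('X + 1)))`_b) i j.
Proof.
move=> ltjB; rewrite (raddf_sum (comp_poly ('X + 1))) rmorph_sum /=.
under eq_bigr => c _ do rewrite comp_polyM spec_shift rmorphM /=.
rewrite (coef_sum_mul (fun c => mF (rowpoly B g c)) (fun a => mF (Y a \Po ('X + 1)))).
apply: eq_convl => a b _ lebj.
by rewrite coef_map /= coef_poly (leq_ltn_trans lebj ltjB).
Qed.

(* Since g(T1, 0) is nonzero mod p, g(T1, zeta - 1) is a non-zero-divisor on
   (O_{k+1}/p)[[T1]] = F_p[[T1, X]]/(X^phi) ... *)
Lemma mulg_inI1 B (Y : nat -> {poly int}) : (phi <= B)%N ->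
  (forall i, inI 1 (mulg B Y i)) -> forall i, inI 1 (Y i).
Proof.
move=> le_phiB gY i; apply/(inI1P _ hp) => j ltj.
apply: (conv_cancel_trunc (y := fun a b => (mF (Y a \Po ('X + 1)))`_b)
                          (K := phi) g0) => // i' j' ltj'.
rewrite -(mulg_modp Y i' (leq_trans ltj' le_phiB)).
exact: (inI1P _ hp _).1 (gY i') j' ltj'.
Qed.

(* ... and, O_{k+1} having no p-torsion, on (O_{k+1}/p^m)[[T1]] for all m. *)
Lemma mulg_inI B m (Y : nat -> {poly int}) : (phi <= B)%N ->
  (forall i, inI m (mulg B Y i)) -> forall i, inI m (Y i).
Proof.
move=> le_phiB; elim: m Y => [|m IH] Y gY.
  by move=> i; exists 0, (Y i); rewrite mul0r add0r expn0 mul1r.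
have [U [V eY]] := inI_choice (IH Y (fun i => inI_le (leqnSn m) (gY i))).
have gV i : inI 1 (mulg B V i).
  apply: (@inI_cancel p k hp m 1); rewrite addn1.
  have -> : (p ^ m)%:R * mulg B V i = mulg B Y i - Phi * mulg B U i.
    by rewrite -!mulgZ -mulgB; apply: eq_bigr => c _; rewrite eY; ring.
  exact/inIB/inIPhi.
move=> i; have [U' [V' eV]] := mulg_inI1 le_phiB gV i.
exists (U i + (p ^ m)%:R * U'), V'.
by rewrite eY eV !expnS expn0 !natrM mulr1; ring.
Qed.

(* If p^m A lies in g O + I_N (m < N), then A lies in g O + I_1: cancel g
   modulo p^m, then cancel p^m. *)
Lemma mulg_defect B m N (D A : nat -> {poly int}) : (phi <= B)%N -> (m < N)%N ->
  (forall i, inI N (mulg B D i - (p ^ m)%:R * A i)) ->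
  exists V : nat -> {poly int}, forall i, inI 1 (mulg B V i - A i).
Proof.
move=> le_phiB lt_mN DA.
have gD i : inI m (mulg B D i).
  rewrite -(subrK ((p ^ m)%:R * A i) (mulg B D i)).
  exact/inID/inIp/(inI_le (ltnW lt_mN)).
have [U [V eD]] := inI_choice (mulg_inI le_phiB gD).
exists V => i; apply: (@inI_le _ _ 1 (N - m)); first by rewrite subn_gt0.
apply: (@inI_cancel p k hp m); rewrite subnKC ?(ltnW lt_mN) //.
have eDi : mulg B D i = Phi * mulg B U i + (p ^ m)%:R * mulg B V i.
  by rewrite /mulg !mulr_sumr -big_split; apply: eq_bigr => c _ /=; rewrite eD; ring.
have -> : (p ^ m)%:R * (mulg B V i - A i) =
          (mulg B D i - (p ^ m)%:R * A i) - Phi * mulg B U i.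
  by rewrite eDi; ring.
exact/inIB/inIPhi.
Qed.

Lemma lift_step N m (G M L : nat -> nat -> int) : (m < N)%N ->
  (forall i j, L i j = conv g G i j + (p ^ m)%:R * M i j) ->
  (exists H : nat -> {poly int}, forall i,
      inI N (spec (N * phi) L i - mulg (N * phi) H i)) ->
  exists y : nat -> nat -> 'F_p,
    forall i j, (j < phi)%N -> (M i j)%:~R = conv gp y i j.
Proof.
move=> lt_mN eL [H LH]; set B := (N * phi)%N.
have le_phiB : (phi <= B)%N by rewrite leq_pmull // (leq_ltn_trans _ lt_mN).
have [V VM] : exists V, forall i, inI 1 (mulg B V i - spec B M i).
  apply: (mulg_defect (D := fun a => H a - spec B G a)) le_phiB lt_mN _ => i.
  have -> : mulg B (fun a => H a - spec B G a) i - (p ^ m)%:R * spec B M i =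
      - (spec B L i - mulg B H i) + (spec B (conv g G) i - mulg B (spec B G) i).
    by rewrite (eq_spec _ _ eL) spec_lin polyC_natr mulgB; ring.
  by apply: inID; [exact/inIN/LH | exact: spec_conv].
exists (fun a b => (mF (V a \Po ('X + 1)))`_b) => i j ltj.
have := (inI1P _ hp _).1 (VM i) j ltj.
rewrite comp_polyB rmorphB coefB mulg_modp ?spec_shift ?(leq_trans ltj le_phiB) //.
rewrite coef_map /= coef_poly (leq_trans ltj le_phiB).
by move/eqP; rewrite subr_eq0 => /eqP ->.
Qed.
End NonZeroDivisor.

Section PadicLifting.
Variables (p : nat) (g : nat -> nat -> int).
Hypothesis hp : prime p.
Local Notation gp := (fun a b => ((g a b)%:~R : 'F_p)).
Hypothesis g0 : exists d, gp d 0%N != 0.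

Lemma intr_Fp_eq0 (z : int) : ((z%:~R : 'F_p) == 0) = (p%:Z %| z)%Z.
Proof. by rewrite (intr_Zp_eq0 (pdiv_gt1 hp)) (pdiv_id hp). Qed.

(* phi(p^(K+1)) >= K, so the truncations T2^phi exhaust Z[[T1,T2]]. *)
Lemma phi_ge K : (K <= phi p K)%N.
Proof.
apply: ltnW; apply: (leq_trans (ltn_expl K (prime_gt1 hp))).
by rewrite /phi leq_pmull // -subn1 subn_gt0 prime_gt1.
Qed.

(* Induction on the exponent; each step combines
   lift_step for all k with conv_patch. *)
Lemma lift_quotient N (L : nat -> nat -> int) :
  (forall k, exists H : nat -> {poly int}, forall i,
      inI p k N (spec (N * phi p k) L i - mulg g (N * phi p k) H i)) ->
  exists G, forall i j, ((p ^ N)%:Z %| L i j - conv g G i j)%Z.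
Proof.
move=> LH; suff: forall m, (m <= N)%N ->
    exists G, forall i j, ((p ^ m)%:Z %| L i j - conv g G i j)%Z by apply.
elim=> [_|m IH lt_mN]; first by exists (fun _ _ => 0) => i j; rewrite expn0 dvd1z.
have [G LG] := IH (ltnW lt_mN).
pose M i j := ((L i j - conv g G i j) %/ (p ^ m)%:Z)%Z.
have eL i j : L i j = conv g G i j + (p ^ m)%:R * M i j.
  by rewrite /M natz mulrC divzK ?LG //; ring.
have [y My] : exists y, forall i j, ((M i j)%:~R : 'F_p) = conv gp y i j.
  apply: (conv_patch g0) => K; have [y My] := lift_step hp g0 lt_mN eL (LH K).
  by exists y => i j ltjK; apply: My (leq_trans ltjK (phi_ge K)).
exists (fun a b => G a b + (p ^ m)%:R * zlift (y a b)) => i j.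
have -> : L i j - conv g (fun a b => G a b + (p ^ m)%:R * zlift (y a b)) i j =
          (p ^ m)%:R * (M i j - conv g (fun a b => zlift (y a b)) i j).
  by rewrite convD convZ eL; ring.
rewrite expnS PoszM mulrC natz dvdz_mul // -intr_Fp_eq0 rmorphB /= conv_intr My.
by rewrite (@eq_convr _ _ _ y) ?subrr // => a b _ _; rewrite zliftK.
Qed.

(* Uniqueness of the quotient modulo p^N: since g(T1, 0) is nonzero mod p,
   g X = 0 mod p^N forces X = 0 mod p^N (peel off one power of p at a time). *)
Lemma quotient_unique N (X : nat -> nat -> int) :
  (forall i j, ((p ^ N)%:Z %| conv g X i j)%Z) ->
  forall i j, ((p ^ N)%:Z %| X i j)%Z.
Proof.
move=> gX; suff: forall m, (m <= N)%N -> forall i j, ((p ^ m)%:Z %| X i j)%Z by apply.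
elim=> [_|m IH lt_mN] i j; first by rewrite expn0 dvd1z.
pose X' a b := (X a b %/ (p ^ m)%:Z)%Z.
have eX a b : X a b = (p ^ m)%:R * X' a b.
  by rewrite /X' natz mulrC divzK // IH // ltnW.
have gX' i' j' : (p%:Z %| conv g X' i' j')%Z.
  have := gX i' j'.
  rewrite (@eq_convr _ _ _ (fun a b => (p ^ m)%:R * X' a b)) // convZ.
  rewrite -(subnKC (ltnW lt_mN)) expnD PoszM natz dvdz_mul2l; last first.
    by rewrite -natz pnatr_eq0 expn_eq0 negb_and -lt0n prime_gt0.
  by apply: dvdz_trans; rewrite unfold_in /= dvdn_exp ?subn_gt0.
have X'0 : ((X' i j)%:~R : 'F_p) = 0.
  apply: (conv_cancel_trunc (y := fun a b => ((X' a b)%:~R : 'F_p))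
                            (K := j.+1) g0) => //.
  by move=> i' j' _; rewrite -conv_intr; apply/eqP; rewrite intr_Fp_eq0.
move/eqP: X'0; rewrite intr_Fp_eq0 => pX'.
by rewrite eX expnS PoszM mulrC natz dvdz_mul.
Qed.
End PadicLifting.

Section Levels.
Variable p : nat.
Hypothesis hp : prime p.

Lemma expS_gt1 n : (1 < p ^ n.+1)%N.
Proof. by rewrite -[1%N](expn0 p) ltn_exp2l ?prime_gt1. Qed.

Lemma dvdz_pexp a b (z : int) :
  (a <= b)%N -> ((p ^ b)%:Z %| z)%Z -> ((p ^ a)%:Z %| z)%Z.
Proof. by move=> le_ab; apply: dvdz_trans; rewrite unfold_in /= dvdn_exp2l. Qed.

Lemma zp_red_zlift n (a : 'Z_(p ^ n.+2)) : zp_red a = (zlift a)%:~R.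
Proof. by rewrite /zp_red /zlift -Zp_nat -pmulrn. Qed.

Lemma zp_red_intr n (z : int) :
  zp_red ((z%:~R : 'Z_(p ^ n.+2))) = (z%:~R : 'Z_(p ^ n.+1)).
Proof.
rewrite zp_red_zlift.
apply/(intr_Zp_eq (expS_gt1 n)); apply: (@dvdz_pexp n.+1 n.+2) => //.
by apply/(intr_Zp_eq (expS_gt1 n.+1)); rewrite zliftK.
Qed.

Definition zrep (F : ps2 p) (n : nat) : nat -> nat -> int :=
  fun a b => zlift (F n a b).

Lemma compat_zrep (F : ps2 p) : ps2_compat F -> forall n i j,
  ((zrep F n.+1 i j)%:~R : 'Z_(p ^ n.+1)) = F n i j.
Proof. by move=> hF n i j; rewrite -zp_red_zlift hF. Qed.

Lemma compat_modp (F : ps2 p) : ps2_compat F -> forall n i j,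
  ((zrep F n i j)%:~R : 'F_p) = (zrep F 0%N i j)%:~R.
Proof.
move=> hF; elim=> [//|n IH] i j; rewrite -IH.
apply/(intr_Zp_eq (pdiv_gt1 hp)); rewrite (pdiv_id hp).
apply: (@dvdz_pexp 1 n.+1) => //.
by apply/(intr_Zp_eq (expS_gt1 n)); rewrite compat_zrep // zliftK.
Qed.

Lemma cyclo_pk_map n k :
  cyclo_pk p k.+1 n = map_poly (intr : int -> 'Z_(p ^ n.+1)) (Phi p k).
Proof.
by rewrite /cyclo_pk /Phi rmorph_sum /=; apply: eq_bigr => i _; rewrite map_polyXn.
Qed.

Lemma comp_poly_def (R : comNzRingType) B (c : nat -> R) (q : {poly R}) :
  (\poly_(j < B) c j) \Po q = \sum_(j < B) (c j)%:P * q ^+ j.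
Proof.
rewrite poly_def (raddf_sum (comp_poly q)) /=; apply: eq_bigr => j _.
by rewrite comp_polyZ rmorphXn /= comp_polyX mul_polyC.
Qed.

(* For the character with psi(gamma_2) = zeta_{p^(k+1)}, the specialisation
   eval_psi at level n is the reduction of spec (phi(p^(k+1)) = phi p k). *)
Lemma eval_psi_spec n k (F : ps2 p) i :
  @eval_psi p k.+1 1 F n i =
  map_poly (intr : int -> 'Z_(p ^ n.+1)) (spec (n.+1 * phi p k) (zrep F n) i).
Proof.
rewrite /eval_psi /spec /rowpoly map_comp_poly rmorphB /= map_polyX rmorph1.
rewrite (totient_pfactor hp) //= -/(phi p k) expr1.
have -> : map_poly (intr : int -> 'Z_(p ^ n.+1))
            (\poly_(j < n.+1 * phi p k) zrep F n i j) =
          \poly_(j < n.+1 * phi p k) F n i j.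
  by apply/polyP => j; rewrite coef_map !coef_poly; case: ifP => // _; apply: zliftK.
by rewrite comp_poly_def.
Qed.

Lemma spec_divisible (g L : ps2 p) :
  (forall k a : nat, coprime a p ->
     ops_dvd k (@eval_psi p k a g) (@eval_psi p k a L)) ->
  forall n k, exists H : nat -> {poly int}, forall i,
    inI p k n.+1 (spec (n.+1 * phi p k) (zrep L n) i -
                  mulg (zrep g n) (n.+1 * phi p k) H i).
Proof.
move=> hpsi n k; have [Hz [_ gHz]] := hpsi k.+1 1%N (coprime1n p).
exists (fun i => plift (Hz n i)) => i; have [q eq] := gHz n i.
set A := _ - _.
have : map_poly (intr : int -> 'Z_(p ^ n.+1)) (A - plift q * Phi p k) = 0.
  rewrite rmorphB rmorphM /= pliftK -cyclo_pk_map -eq rmorphB /= -eval_psi_spec.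
  rewrite rmorph_sum /=; apply/eqP; rewrite subr_eq0; apply/eqP.
  by congr (_ - _); apply: eq_bigr => c _; rewrite rmorphM /= -eval_psi_spec pliftK.
case/(map_poly_Zp_eq0 (expS_gt1 n)) => Q /eqP; rewrite subr_eq => /eqP eA.
by exists (plift q), Q; rewrite eA addrC.
Qed.
End Levels.

Section Quotients.
Variables (p : nat) (g L : ps2 p).
Hypotheses (hp : prime p) (hg : ps2_compat g) (hL : ps2_compat L).
Hypothesis hg0 : exists i : nat, g 0%N i 0%N != 0.
Hypothesis hpsi : forall k a : nat, coprime a p ->
  ops_dvd k (@eval_psi p k a g) (@eval_psi p k a L).

Lemma zrep_g0 n : exists d, ((zrep g n d 0%N)%:~R : 'F_p) != 0.
Proof.
case: hg0 => d gd0; exists d; rewrite compat_modp // intr_Fp_eq0 //.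
apply: contra gd0 => pg.
by rewrite -[g 0%N d 0%N]zliftK (intr_Zp_eq0 (expS_gt1 hp 0)).
Qed.

Lemma level_quotient n : exists G, forall i j,
  ((p ^ n.+1)%:Z %| zrep L n i j - conv (zrep g n) G i j)%Z.
Proof. exact: (lift_quotient hp (zrep_g0 n) (fun k => spec_divisible hp hpsi n k)). Qed.

Lemma level_eq n G : (forall i j,
    ((p ^ n.+1)%:Z %| zrep L n i j - conv (zrep g n) G i j)%Z) ->
  forall i j, L n i j = conv (g n) (fun a b => (G a b)%:~R) i j.
Proof.
move=> LG i j; rewrite -[L n i j]zliftK -/(zrep L n i j).
rewrite (proj2 (intr_Zp_eq (expS_gt1 hp n) _ _) (LG i j)) conv_intr.
by apply: eq_convl => a b _ _; rewrite zliftK.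
Qed.

(* Quotients at consecutive levels agree modulo p^(n+1), by uniqueness of the
   quotient modulo p^(n+1). *)
Lemma level_compat n (G G' : nat -> nat -> int) :
  (forall i j, ((p ^ n.+1)%:Z %| zrep L n i j - conv (zrep g n) G i j)%Z) ->
  (forall i j, ((p ^ n.+2)%:Z %| zrep L n.+1 i j - conv (zrep g n.+1) G' i j)%Z) ->
  forall i j, ((p ^ n.+1)%:Z %| G' i j - G i j)%Z.
Proof.
move=> LG LG'; apply: (quotient_unique hp (zrep_g0 n)) => i j.
have red_g (X : nat -> nat -> int) : conv (fun a b => (zrep g n a b)%:~R)
    (fun a b => (X a b)%:~R) i j = conv (g n) (fun a b => (X a b)%:~R) i j.
  by apply: eq_convl => a b _ _; rewrite zliftK.
rewrite -(intr_Zp_eq0 (expS_gt1 hp n)) convB rmorphB /= subr_eq0 !conv_intr.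
rewrite !red_g -(level_eq LG) -(compat_zrep hL) -/(zrep L n.+1 i j).
rewrite (proj2 (intr_Zp_eq (expS_gt1 hp n) _ _) (dvdz_pexp (leqnSn _) (LG' i j))).
by rewrite conv_intr; apply/eqP; apply: eq_convl => a b _ _; rewrite compat_zrep.
Qed.
End Quotients.

(* The level-n quotients G n form a compatible family H with L = g H. *)
Theorem theorem4p1 (p : nat) (hp : prime p) (hodd : odd p)
    (g L : ps2 p) (hg : ps2_compat g) (hL : ps2_compat L)
    (hg0 : exists i : nat, g 0%N i 0%N != 0)
    (hpsi : forall k a : nat, coprime a p ->
              ops_dvd k (@eval_psi p k a g) (@eval_psi p k a L)) :
  ps2_dvd g L.
Proof.
have /choice [G LG] := level_quotient hp hg hg0 hpsi.
exists (fun n a b => (G n a b)%:~R); split=> [n i j|n].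
  rewrite zp_red_intr //; apply/(intr_Zp_eq (expS_gt1 hp n)).
  exact: (level_compat hp hg hL hg0 (LG n) (LG n.+1)).
exact: (level_eq hp (LG n)).
Qed.
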